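(* Let $f_1,f_2,f_3$ be smooth nowhere-vanishing functions on $\mathbb R^3$, $g=\frac{1}{f_1^2}dx^1\otimes dx^1+\frac{1}{f_2^2}dx^2\otimes dx^2+\frac{1}{f_3^2}dx^3\otimes dx^3$, $E_i=f_i\frac{\partial}{\partial x^i}$, and let $V_1=\sum_{i=1}^3V_1^iE_i$, $V_2=\sum_{i=1}^3V_2^iE_i$ with smooth components. (i) If $f_i$ and $V_k^i$ depend only on $x^1$ for all $i\in\{1,2,3\}$, $k\in\{1,2\}$, and $V_1,V_2$ are Killing vector fields, then $V_1^1=V_2^1+\tilde c_1$ and $V_1^i=V_2^i+\tilde c_i+\frac{c_i}{f_i}$ for $i\in\{2,3\}$, for some constants $c_2,c_3,\tilde c_1,\tilde c_2,\tilde c_3\in\mathbb R$. (ii) If $f_i$ and $V_k^i$ depend only on $x^i$ for all $i\in\{1,2,3\}$, $k\in\{1,2\}$, and $V_1,V_2$ are Killing vector fields, then $V_1^i=V_2^i+c_i$ for some constants $c_i\in\mathbb R$, $i\in\{1,2,3\}$.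
   Context: $x^1,x^2,x^3$ are the standard coordinates on $\mathbb R^3$. A vector field $V$ is Killing if $\mathcal L_Vg=0$. *)

From Stdlib Require Import Reals.
From Coquelicot Require Import Coquelicot.
Open Scope R_scope.

Inductive idx : Type := I1 | I2 | I3.

Definition fn3 := R -> R -> R -> R.

Definition sum3 (h : idx -> R) : R := h I1 + h I2 + h I3.

Definition partial (i : idx) (F : fn3) : fn3 :=
  fun x y z => match i with
  | I1 => Derive (fun t => F t y z) x
  | I2 => Derive (fun t => F x t z) y
  | I3 => Derive (fun t => F x y t) z
  end.

Definition ex_partial (i : idx) (F : fn3) : Prop :=
  forall x y z, match i with
  | I1 => ex_derive (fun t => F t y z) x
  | I2 => ex_derive (fun t => F x t z) y
  | I3 => ex_derive (fun t => F x y t) z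
  end.

Definition uncurry3 (F : fn3) : R * R * R -> R :=
  fun p => F (fst (fst p)) (snd (fst p)) (snd p).

Fixpoint Ck (k : nat) (F : fn3) : Prop :=
  match k with
  | O => forall p : R * R * R, continuous (uncurry3 F) p
  | S k' => (forall p : R * R * R, continuous (uncurry3 F) p) /\
            forall i, ex_partial i F /\ Ck k' (partial i F)
  end.

Definition smooth (F : fn3) : Prop := forall k, Ck k F.

(* Vector fields (coordinate components X^k, X = sum X^k d/dx^k) and
   (0,2)-tensor fields (components g_ij). *)
Definition vfield := idx -> fn3.
Definition tensor2 := idx -> idx -> fn3.

Definition lie_deriv (X : vfield) (g : tensor2) : tensor2 :=
  fun i j x y z =>
    sum3 (fun k => X k x y z * partial k (g i j) x y z
                   + g k j x y z * partial i (X k) x y z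
                   + g i k x y z * partial j (X k) x y z).

Definition Killing (X : vfield) (g : tensor2) : Prop :=
  forall i j x y z, lie_deriv X g i j x y z = 0.

Definition idx_eqb (i j : idx) : bool :=
  match i, j with I1, I1 | I2, I2 | I3, I3 => true | _, _ => false end.

Definition diag_metric (f : idx -> fn3) : tensor2 :=
  fun i j x y z => if idx_eqb i j then 1 / (f i x y z) ^ 2 else 0.

(* V = sum_i V^i E_i with E_i = f_i d/dx^i; coordinate components V^i f_i. *)
Definition frame_field (f : idx -> fn3) (V : idx -> fn3) : vfield :=
  fun i x y z => V i x y z * f i x y z.

Definition depends_only_on (j : idx) (F : fn3) : Prop :=
  forall x y z x' y' z',
    match j with
    | I1 => F x y z = F x y' z'
    | I2 => F x y z = F x' y z'
    | I3 => F x y z = F x' y' z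
    end.

From Stdlib Require Import Reals Lra ssreflect.
From Coquelicot Require Import Coquelicot.
Open Scope R_scope.

(* For g = sum_i f_i^-2 dx^i (x) dx^i and X = sum_i V^i f_i d/dx^i, the Killing equations read
     (L_X g)_ii = X^k d_k (f_i^-2) + 2 f_i^-2 d_i (V^i f_i),
     (L_X g)_ij = f_j^-2 d_i (V^j f_j) + f_i^-2 d_j (V^i f_i)    (i <> j).
   If f_i and V^i depend only on x^i, the first one collapses to 2 f_i^-1 d_i V^i = 0, so V^i is
   constant. In case (i) this gives V^1 constant, and the equations (L_X g)_1j make V^j f_j
   constant for j = 2, 3. So each Killing field separately has these constant quantities, and
   subtracting the two fields gives the theorem. *)

Lemma constant_of_Derive_eq0 (u : R -> R) :
  (forall t, ex_derive u t) -> (forall t, Derive u t = 0) -> forall s t, u s = u t.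
Proof.
move=> du u'0 s t.
case: (MVT_gen u t s (Derive u)) => [r _ | r _ | c [_]].
- exact: Derive_correct.
- exact/continuity_pt_filterlim/ex_derive_continuous.
- rewrite u'0; lra.
Qed.

Lemma Derive_inv_sq (phi : R -> R) (t : R) :
  ex_derive phi t -> phi t <> 0 ->
  Derive (fun s => 1 / phi s ^ 2) t = - 2 * Derive phi t / phi t ^ 3.
Proof.
move=> dphi phi_t; apply: is_derive_unique; auto_derive.
- by split=> //; split=> //; rewrite Rmult_1_r; apply: Rmult_integral_contrapositive.
- by change (fun x => phi x) with phi; field.
Qed.

Lemma Derive_eq0_of_killing_ode (u phi : R -> R) (t : R) :
  ex_derive u t -> ex_derive phi t -> phi t <> 0 ->
  u t * phi t * Derive (fun s => 1 / phi s ^ 2) t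
    + 2 * (1 / phi t ^ 2) * Derive (fun s => u s * phi s) t = 0 ->
  Derive u t = 0.
Proof.
move=> du dphi phi_t ode.
have -> : Derive u t =
  phi t / 2 * (u t * phi t * Derive (fun s => 1 / phi s ^ 2) t
               + 2 * (1 / phi t ^ 2) * Derive (fun s => u s * phi s) t).
  by rewrite Derive_inv_sq // Derive_mult //; field.
by rewrite ode Rmult_0_r.
Qed.

Definition coord (j : idx) (x y z : R) : R :=
  match j with I1 => x | I2 => y | I3 => z end.

Definition profile (j : idx) (F : fn3) (t : R) : R :=
  match j with I1 => F t 0 0 | I2 => F 0 t 0 | I3 => F 0 0 t end.

Lemma depends_only_on_lift1 {j F} (h : R -> R) :
  depends_only_on j F -> depends_only_on j (fun x y z => h (F x y z)).
Proof. by case: j => F_j x y z x' y' z'; rewrite (F_j x y z x' y' z'). Qed.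

Lemma depends_only_on_lift2 {j F G} (h : R -> R -> R) :
  depends_only_on j F -> depends_only_on j G ->
  depends_only_on j (fun x y z => h (F x y z) (G x y z)).
Proof.
by case: j => F_j G_j x y z x' y' z'; rewrite (F_j x y z x' y' z') (G_j x y z x' y' z').
Qed.

Lemma profile_coord {j F} :
  depends_only_on j F -> forall x y z, F x y z = profile j F (coord j x y z).
Proof. by case: j => F_j x y z; apply: F_j. Qed.

Lemma partial_profile {j F} :
  depends_only_on j F -> forall x y z, partial j F x y z = Derive (profile j F) (coord j x y z).
Proof. by case: j => F_j x y z; apply: Derive_ext => t; apply: F_j. Qed.

Lemma partial_eq0_of_depends_only_on {j F} i :
  depends_only_on j F -> i <> j -> forall x y z, partial i F x y z = 0.
Proof.
move=> F_j ij x y z; rewrite -(Derive_const (F x y z) (coord i x y z)).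
by case: i j ij F_j => -[] // _ F_j; apply: Derive_ext => t; apply: F_j.
Qed.

Lemma profile_lift1 j (h : R -> R) F :
  profile j (fun x y z => h (F x y z)) = fun t => h (profile j F t).
Proof. by case: j. Qed.

Lemma profile_lift2 j (h : R -> R -> R) F G :
  profile j (fun x y z => h (F x y z) (G x y z)) = fun t => h (profile j F t) (profile j G t).
Proof. by case: j. Qed.

Lemma coord_diag j t : coord j t t t = t.
Proof. by case: j. Qed.

Lemma sum3_single i (h : idx -> R) : (forall k, k <> i -> h k = 0) -> sum3 h = h i.
Proof.
rewrite /sum3; case: i => h0;
  [rewrite (h0 I2) ?(h0 I3) | rewrite (h0 I1) ?(h0 I3) | rewrite (h0 I1) ?(h0 I2)] => //;
  ring.
Qed.

Lemma ex_partial_mult i F G :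
  ex_partial i F -> ex_partial i G -> ex_partial i (fun x y z => F x y z * G x y z).
Proof. by case: i => dF dG x y z; apply: ex_derive_mult. Qed.

Lemma ex_derive_profile j F t : ex_partial j F -> ex_derive (profile j F) t.
Proof. by case: j => H; [apply: (H t 0 0) | apply: (H 0 t 0) | apply: (H 0 0 t)]. Qed.

Lemma smooth_ex_partial i F : smooth F -> ex_partial i F.
Proof. by move=> /(_ 1%nat) [_ /(_ i) []]. Qed.

Lemma Killing_diag_metric_diag {f : idx -> fn3} {X : vfield} :
  Killing X (diag_metric f) -> forall i x y z,
  sum3 (fun k => X k x y z * partial k (fun x y z => 1 / f i x y z ^ 2) x y z)
    + 2 * (1 / f i x y z ^ 2) * partial i (X i) x y z = 0.
Proof.
move=> X_Killing i x y z; have := X_Killing i i x y z.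
rewrite /lie_deriv /sum3 /diag_metric.
by case: i => /=; rewrite !Rmult_0_l => <-; ring.
Qed.

Lemma Killing_diag_metric_offdiag {f : idx -> fn3} {X : vfield} :
  Killing X (diag_metric f) -> forall i j x y z, i <> j ->
  1 / f j x y z ^ 2 * partial i (X j) x y z
    + 1 / f i x y z ^ 2 * partial j (X i) x y z = 0.
Proof.
move=> X_Killing i j x y z ij; have := X_Killing i j x y z.
rewrite /lie_deriv /sum3 /diag_metric.
by case: i j ij => -[] //= _; rewrite !Derive_const !Rmult_0_l => <-; ring.
Qed.

Lemma depends_only_on_const {j F} :
  depends_only_on j F -> ex_partial j F -> (forall x y z, partial j F x y z = 0) ->
  forall x y z, F x y z = F 0 0 0.
Proof.
move=> F_j dF F'0 x y z; rewrite !(profile_coord F_j).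
apply: constant_of_Derive_eq0 => t; first exact: ex_derive_profile.
by rewrite -(coord_diag j t) -partial_profile.
Qed.

Section FrameKilling.

Context {f V : idx -> fn3}.
Hypothesis f_neq0 : forall i x y z, f i x y z <> 0.
Hypothesis V_Killing : Killing (frame_field f V) (diag_metric f).

Lemma frame_component_const i :
  ex_partial i (f i) -> ex_partial i (V i) ->
  depends_only_on i (f i) -> depends_only_on i (V i) ->
  forall x y z, V i x y z = V i 0 0 0.
Proof.
move=> df dV f_i V_i; apply: (depends_only_on_const V_i dV) => x y z.
have inv_sq_i := depends_only_on_lift1 (fun a => 1 / a ^ 2) f_i.
have := Killing_diag_metric_diag V_Killing i x y z.
rewrite (sum3_single i); last first.
  by move=> k ki; rewrite (partial_eq0_of_depends_only_on _ inv_sq_i) // Rmult_0_r.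
rewrite /frame_field (partial_profile inv_sq_i).
rewrite (partial_profile (depends_only_on_lift2 Rmult V_i f_i)).
rewrite (profile_lift1 _ (fun a => 1 / a ^ 2)) (profile_lift2 _ Rmult).
rewrite (partial_profile V_i) (profile_coord V_i) (profile_coord f_i).
apply: Derive_eq0_of_killing_ode; try exact: ex_derive_profile.
by rewrite -(profile_coord f_i).
Qed.

Lemma frame_component_offdiag_const i j : i <> j ->
  ex_partial i (f j) -> ex_partial i (V j) ->
  depends_only_on i (f i) -> depends_only_on i (V i) ->
  depends_only_on i (f j) -> depends_only_on i (V j) ->
  forall x y z, V j x y z * f j x y z = V j 0 0 0 * f j 0 0 0.
Proof.
move=> ij dfj dVj f_i V_i f_j V_j.
apply: (depends_only_on_const (depends_only_on_lift2 Rmult V_j f_j)) => [|x y z].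
  exact: ex_partial_mult.
have := Killing_diag_metric_offdiag V_Killing i j x y z ij.
rewrite /frame_field (partial_eq0_of_depends_only_on j (depends_only_on_lift2 Rmult V_i f_i));
  last exact: not_eq_sym.
have fj2 : 1 / f j x y z ^ 2 <> 0.
  by rewrite /Rdiv Rmult_1_l; apply/Rinv_neq_0_compat/pow_nonzero.
by rewrite Rmult_0_r Rplus_0_r; case/Rmult_integral.
Qed.

Lemma Killing_frame_depends_only_on_x1 :
  (forall i, ex_partial I1 (f i)) -> (forall i, ex_partial I1 (V i)) ->
  (forall i, depends_only_on I1 (f i)) -> (forall i, depends_only_on I1 (V i)) ->
  (forall x y z, V I1 x y z = V I1 0 0 0) /\
  (forall j x y z, j <> I1 -> V j x y z * f j x y z = V j 0 0 0 * f j 0 0 0).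
Proof.
move=> df dV f_dep V_dep; split; first exact: frame_component_const.
by move=> j x y z j1; apply: (frame_component_offdiag_const _ _ (not_eq_sym j1)).
Qed.

End FrameKilling.

Lemma eq_add_div_of_mul_eq (v w c a b : R) :
  c <> 0 -> v * c = a -> w * c = b -> v = w + (a - b) / c.
Proof. by move=> c0 <- <-; field. Qed.

Theorem mainTheorem9 :
  forall (f V1 V2 : idx -> fn3),
    (forall i, smooth (f i)) ->
    (forall i x y z, f i x y z <> 0) ->
    (forall i, smooth (V1 i)) ->
    (forall i, smooth (V2 i)) ->
    (* (i) *)
    ((forall i, depends_only_on I1 (f i) /\ depends_only_on I1 (V1 i)
                /\ depends_only_on I1 (V2 i)) ->
     Killing (frame_field f V1) (diag_metric f) ->
     Killing (frame_field f V2) (diag_metric f) ->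
     exists c2 c3 ct1 ct2 ct3 : R,
       forall x y z,
         V1 I1 x y z = V2 I1 x y z + ct1 /\
         V1 I2 x y z = V2 I2 x y z + ct2 + c2 / f I2 x y z /\
         V1 I3 x y z = V2 I3 x y z + ct3 + c3 / f I3 x y z)
    /\
    (* (ii) *)
    ((forall i, depends_only_on i (f i) /\ depends_only_on i (V1 i)
                /\ depends_only_on i (V2 i)) ->
     Killing (frame_field f V1) (diag_metric f) ->
     Killing (frame_field f V2) (diag_metric f) ->
     exists c : idx -> R,
       forall i x y z, V1 i x y z = V2 i x y z + c i).
Proof.
move=> f V1 V2 f_sm f_neq0 V1_sm V2_sm.
have ex_partial_sm (W : idx -> fn3) i : (forall k, smooth (W k)) -> forall k, ex_partial i (W k).
  by move=> W_sm k; apply: smooth_ex_partial.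
split=> dep K1 K2;
  have f_dep i := proj1 (dep i); have V1_dep i := proj1 (proj2 (dep i));
  have V2_dep i := proj2 (proj2 (dep i)).
- have [A1 A] := Killing_frame_depends_only_on_x1 f_neq0 K1
    (ex_partial_sm f I1 f_sm) (ex_partial_sm V1 I1 V1_sm) f_dep V1_dep.
  have [B1 B] := Killing_frame_depends_only_on_x1 f_neq0 K2
    (ex_partial_sm f I1 f_sm) (ex_partial_sm V2 I1 V2_sm) f_dep V2_dep.
  pose c j := V1 j 0 0 0 * f j 0 0 0 - V2 j 0 0 0 * f j 0 0 0.
  exists (c I2), (c I3), (V1 I1 0 0 0 - V2 I1 0 0 0), 0, 0 => x y z.
  rewrite !Rplus_0_r (A1 x y z) (B1 x y z); split; first ring.
  by split; apply: eq_add_div_of_mul_eq; rewrite ?A ?B.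
- have V_const (W : idx -> fn3) : (forall k, smooth (W k)) ->
      Killing (frame_field f W) (diag_metric f) -> (forall i, depends_only_on i (W i)) ->
      forall i x y z, W i x y z = W i 0 0 0.
    move=> W_sm KW W_dep i.
    by apply: (frame_component_const f_neq0 KW) => //; exact: ex_partial_sm.
  exists (fun i => V1 i 0 0 0 - V2 i 0 0 0) => i x y z.
  by rewrite (V_const V1 V1_sm K1 V1_dep) (V_const V2 V2_sm K2 V2_dep); ring.
Qed.
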